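(* Let $\mu=\prod_{i=1}^d\mu_i$ be a product probability measure on $\mathbb{R}^d$, where $\mathrm{d}\mu_i(x_i)=\rho_i(|x_i|)\,\mathrm{d}x_i$ with $\rho_i:[0,\infty)\to(0,\infty)$ continuous. For $i=1,\dots,d$ let $\phi_i:[0,\infty)\to[0,\infty)$ be continuous and strictly increasing with $\phi_i(0)=0$, and set $B=\{x\in\mathbb{R}^d:\ \phi_1(|x_1|)+\cdots+\phi_d(|x_d|)\le1\}$ (which need not be convex). Then for every $f\in\bar{\mathcal{C}}_d$, $\int f\mathbf{1}_B\,\mathrm{d}\mu\ge\big(\int f\,\mathrm{d}\mu\big)\mu(B)$.
   Context: $\mathcal{C}_1$ denotes the set of continuous compactly supported functions $g:\mathbb{R}\to[0,\infty)$ such that for every $c>0$ the set $\{t: g(t)>c\}$ is convex, and $g(t)\le g(0)$ for all $t\in\mathbb{R}$. $\bar{\mathcal{C}}_d$ denotes the set of continuous compactly supported functions $f:\mathbb{R}^d\to[0,\infty)$ such that for every $i$ and every fixed choice of the other $d-1$ coordinates, the function $x_i\mapsto f(x)$ belongs to $\mathcal{C}_1$. *)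

From Stdlib Require Export Reals Lra ClassicalEpsilon.
Open Scope R_scope.

(* Points of R^d are represented as x : nat -> R, coordinates 0..d-1 *)
Definition upd (x : nat -> R) (j : nat) (t : R) : nat -> R :=
  fun i => if Nat.eqb i j then t else x i.

(* 1D Riemann integral on [a,b] as a total function (value of RiemannInt
   whenever f is Riemann integrable, which is independent of the proof). *)
Definition RI (f : R -> R) (a b : R) : R :=
  epsilon (inhabits 0)
    (fun I => exists pr : Riemann_integrable f a b, RiemannInt pr = I).

(* Iterated integral over the box [-M,M]^k of coordinates 0..k-1. *)
Fixpoint box_int (k : nat) (M : R) (g : (nat -> R) -> R) (x : nat -> R) : R :=
  match k with
  | O => g x
  | S k' => RI (fun t => box_int k' M g (upd x k' t)) (- M) M
  end.

(* Integral over R^d : limit of the integrals over [-n,n]^d. *)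
Definition full_int (d : nat) (g : (nat -> R) -> R) : R :=
  epsilon (inhabits 0)
    (fun L => Un_cv (fun n => box_int d (INR n) g (fun _ => 0)) L).

Fixpoint sumd (d : nat) (a : nat -> R) : R :=
  match d with O => 0 | S k => sumd k a + a k end.
Fixpoint prodd (d : nat) (a : nat -> R) : R :=
  match d with O => 1 | S k => prodd k a * a k end.

Definition dens (d : nat) (rho : nat -> R -> R) (x : nat -> R) : R :=
  prodd d (fun i => rho i (Rabs (x i))).

Definition mu_int (d : nat) (rho : nat -> R -> R) (g : (nat -> R) -> R) : R :=
  full_int d (fun x => g x * dens d rho x).

Definition indB (d : nat) (phi : nat -> R -> R) (x : nat -> R) : R :=
  if Rle_dec (sumd d (fun i => phi i (Rabs (x i)))) 1 then 1 else 0.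

Definition C1 (g : R -> R) : Prop :=
  continuity g /\
  (exists M, forall t, M < Rabs t -> g t = 0) /\
  (forall t, 0 <= g t) /\
  (forall c, 0 < c -> forall s t u, c < g s -> c < g t -> s <= u <= t -> c < g u) /\
  (forall t, g t <= g 0).

Definition contd (d : nat) (f : (nat -> R) -> R) : Prop :=
  forall x eps, 0 < eps -> exists delta, 0 < delta /\
    forall y, (forall i, (i < d)%nat -> Rabs (y i - x i) < delta) ->
      Rabs (f y - f x) < eps.

Definition Cbar (d : nat) (f : (nat -> R) -> R) : Prop :=
  contd d f /\
  (exists M, forall x, (exists i, (i < d)%nat /\ M < Rabs (x i)) -> f x = 0) /\
  (forall x, 0 <= f x) /\
  (forall i x, (i < d)%nat -> C1 (fun t => f (upd x i t))).

(* Every coordinate section of f and of the indicator of B is unimodal, i.e.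
   nonincreasing in |x_i|, and the indicator of B is moreover even in each
   coordinate.  In one variable, with an even weight w, replacing g by
   g(t) + g(-t) makes both functions even and nonincreasing in |t|, hence
   similarly ordered, and Chebyshev's integral inequality gives
   (int w g)(int w h) <= (int w)(int w g h).  Integrating out one coordinate
   preserves unimodality and evenness of the remaining sections, so the
   inequality iterates over the box [-n,n]^d, where the total mass tends to 1;
   letting n go to infinity gives the theorem.  Riemann integrability of all
   iterated sections comes from monotonicity. *)

From Pilot Require Import Defs.
From Stdlib Require Import Reals Lra Lia FunctionalExtensionality ClassicalEpsilon Classical.
From Coquelicot Require Import Coquelicot.
Open Scope R_scope.

Lemma RI_RInt (f : R -> R) a b : ex_RInt f a b -> RI f a b = RInt f a b.
Proof.
  intro H. unfold RI.
  destruct (epsilon_spec (inhabits 0)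
              (fun I => exists pr : Riemann_integrable f a b, RiemannInt pr = I)) as [pr Hpr].
  { exists (RiemannInt (ex_RInt_Reals_0 _ _ _ H)). eexists; reflexivity. }
  rewrite <- Hpr. symmetry; apply RInt_Reals.
Qed.

Lemma ex_RInt_Rplus (f g : R -> R) a b :
  ex_RInt f a b -> ex_RInt g a b -> ex_RInt (fun t => f t + g t) a b.
Proof. exact (ex_RInt_plus (V:=R_NormedModule) f g a b). Qed.

Lemma ex_RInt_Rscal (f : R -> R) a b k : ex_RInt f a b -> ex_RInt (fun t => k * f t) a b.
Proof. exact (ex_RInt_scal (V:=R_NormedModule) f a b k). Qed.

Lemma RInt_Rplus (f g : R -> R) a b : ex_RInt f a b -> ex_RInt g a b ->
  RInt (fun t => f t + g t) a b = RInt f a b + RInt g a b.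
Proof. exact (RInt_plus (V:=R_CompleteNormedModule) f g a b). Qed.

Lemma RInt_Rscal (f : R -> R) a b k : ex_RInt f a b -> RInt (fun t => k * f t) a b = k * RInt f a b.
Proof. exact (RInt_scal (V:=R_CompleteNormedModule) f a b k). Qed.

Lemma ex_RInt_Rext (f g : R -> R) a b :
  (forall x, Rmin a b < x < Rmax a b -> f x = g x) -> ex_RInt f a b -> ex_RInt g a b.
Proof. exact (ex_RInt_ext (V:=R_NormedModule) f g a b). Qed.

Lemma RInt_Rext (f g : R -> R) a b :
  (forall x, Rmin a b < x < Rmax a b -> f x = g x) -> RInt f a b = RInt g a b.
Proof. exact (RInt_ext (V:=R_CompleteNormedModule) f g a b). Qed.

Lemma ex_RInt_Rcontinuous (f : R -> R) a b : (forall z, continuous f z) -> ex_RInt f a b.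
Proof. intro H. apply (ex_RInt_continuous (V:=R_CompleteNormedModule)). auto. Qed.

Lemma ex_RInt_R0 a b : ex_RInt (fun _ : R => 0) a b.
Proof. apply (ex_RInt_const (V:=R_NormedModule)). Qed.

Lemma RInt_R0 a b : RInt (fun _ : R => 0) a b = 0.
Proof. rewrite (RInt_const (V:=R_CompleteNormedModule)). unfold scal; simpl; unfold mult; simpl. ring. Qed.

Lemma ex_RInt_Rsub (f : R -> R) a b c d : a <= c -> c <= d -> d <= b -> ex_RInt f a b -> ex_RInt f c d.
Proof.
  intros Hac Hcd Hdb H.
  apply (ex_RInt_Chasles_1 (V:=R_CompleteNormedModule)) with b; [lra|].
  apply (ex_RInt_Chasles_2 (V:=R_CompleteNormedModule)) with a; [lra|auto].
Qed.

Lemma RInt_split3 (F : R -> R) K M : 0 <= K <= M -> ex_RInt F (- M) M ->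
  RInt F (- M) M = RInt F (- M) (- K) + RInt F (- K) K + RInt F K M.
Proof.
  intros HK HF.
  rewrite <- (RInt_Chasles (V:=R_CompleteNormedModule) F (- M) (- K) M),
          <- (RInt_Chasles (V:=R_CompleteNormedModule) F (- K) K M);
    try (apply ex_RInt_Rsub with (- M) M; auto; lra).
  simpl; unfold plus; simpl. ring.
Qed.

Lemma ex_RInt_lincomb4 (f1 f2 f3 f4 : R -> R) c2 c3 c4 a b :
  ex_RInt f1 a b -> ex_RInt f2 a b -> ex_RInt f3 a b -> ex_RInt f4 a b ->
  ex_RInt (fun s => f1 s + c2 * f2 s + c3 * f3 s + c4 * f4 s) a b.
Proof.
  intros H1 H2 H3 H4.
  apply ex_RInt_Rplus; [apply ex_RInt_Rplus; [apply ex_RInt_Rplus|]|]; auto; apply ex_RInt_Rscal; auto.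
Qed.

Lemma RInt_lincomb4 (f1 f2 f3 f4 : R -> R) c2 c3 c4 a b :
  ex_RInt f1 a b -> ex_RInt f2 a b -> ex_RInt f3 a b -> ex_RInt f4 a b ->
  RInt (fun s => f1 s + c2 * f2 s + c3 * f3 s + c4 * f4 s) a b =
  RInt f1 a b + c2 * RInt f2 a b + c3 * RInt f3 a b + c4 * RInt f4 a b.
Proof.
  intros H1 H2 H3 H4.
  pose proof (ex_RInt_Rscal _ _ _ c2 H2) as H2'.
  pose proof (ex_RInt_Rscal _ _ _ c3 H3) as H3'.
  pose proof (ex_RInt_Rscal _ _ _ c4 H4) as H4'.
  rewrite (RInt_Rplus _ _ _ _ (ex_RInt_Rplus _ _ _ _ (ex_RInt_Rplus _ _ _ _ H1 H2') H3') H4'),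
          (RInt_Rplus _ _ _ _ (ex_RInt_Rplus _ _ _ _ H1 H2') H3'), (RInt_Rplus _ _ _ _ H1 H2'),
          (RInt_Rscal _ _ _ _ H2), (RInt_Rscal _ _ _ _ H3), (RInt_Rscal _ _ _ _ H4).
  reflexivity.
Qed.

Lemma ex_RInt_uniform_approx (f : R -> R) a b : a <= b ->
  (forall e, 0 < e -> exists g, ex_RInt g a b /\ forall t, a <= t <= b -> Rabs (f t - g t) <= e) ->
  ex_RInt f a b.
Proof.
  intros Hab H. apply ex_RInt_Reals_1. intro eps.
  set (e := eps / (2 * (b - a + 1))).
  assert (He : 0 < e). { unfold e. apply Rdiv_lt_0_compat. destruct eps; simpl; lra. lra. }
  assert (He' : e * (b - a + 1) = eps / 2) by (unfold e; field; lra).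
  destruct (constructive_indefinite_description _ (H e He)) as [g [Hg Hfg]].
  assert (He2 : 0 < eps / 2) by (destruct eps; simpl; lra).
  destruct (ex_RInt_Reals_0 _ _ _ Hg (mkposreal _ He2)) as [phi [psi [H1 H2]]].
  exists phi, (mkStepFun (StepFun_P28 1 psi (mkStepFun (StepFun_P4 a b e)))).
  split.
  - intros t Ht. simpl. unfold fct_cte.
    rewrite Rmin_left, Rmax_right in Ht, H1 by lra.
    specialize (H1 t Ht). specialize (Hfg t Ht).
    replace (f t - phi t) with ((f t - g t) + (g t - phi t)) by ring.
    eapply Rle_trans; [apply Rabs_triang|lra].
  - rewrite StepFun_P30, StepFun_P18. simpl in H2 |- *.
    eapply Rle_lt_trans; [apply Rabs_triang|].
    rewrite Rmult_1_l, (Rabs_pos_eq (e * (b - a))) by nra.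
    assert (e * (b - a) = eps / 2 - e) by (rewrite <- He'; ring). lra.
Qed.

Lemma ex_RInt_mul_superlevel (w u : R -> R) a b v : a <= b ->
  (forall z, continuous w z) ->
  (forall s t, a <= s <= t -> t <= b -> u t <= u s) ->
  ex_RInt (fun t => w t * (if Rle_dec v (u t) then 1 else 0)) a b.
Proof.
  intros Hab Hw Hu.
  destruct (Rle_dec v (u a)) as [Ha|Ha].
  2: { apply ex_RInt_Rext with (fun _ => 0); [|apply ex_RInt_R0].
       intros x Hx. rewrite Rmin_left, Rmax_right in Hx by lra.
       destruct (Rle_dec v (u x)); [|ring].
       assert (u x <= u a) by (apply Hu; lra). lra. }
  (* the superlevel set {v <= u} is an interval [a, tau] or [a, tau) *)
  set (E := fun t => a <= t <= b /\ v <= u t).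
  destruct (completeness E) as [tau [Hub Hlub]].
  { exists b; intros t [Ht _]; lra. }
  { exists a; split; [lra|exact Ha]. }
  assert (Hat : a <= tau) by (apply Hub; split; [lra|exact Ha]).
  assert (Htb : tau <= b) by (apply Hlub; intros t [Ht _]; lra).
  apply ex_RInt_Chasles with tau.
  - apply ex_RInt_Rext with w; [|apply ex_RInt_Rcontinuous; auto].
    intros x Hx. rewrite Rmin_left, Rmax_right in Hx by lra.
    destruct (Rle_dec v (u x)) as [h|h]; [ring|].
    exfalso.
    assert (exists s, E s /\ x < s) as [s [[Hs1 Hs2] Hs3]].
    { apply not_all_not_ex. intro Hn. assert (tau <= x); [|lra]. apply Hlub. intros s Hs.
      destruct (Rle_dec s x); auto. exfalso; apply (Hn s); split; auto; lra. }
    assert (u s <= u x) by (apply Hu; lra). lra.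
  - apply ex_RInt_Rext with (fun _ => 0); [|apply ex_RInt_R0].
    intros x Hx. rewrite Rmin_left, Rmax_right in Hx by lra.
    destruct (Rle_dec v (u x)) as [h|h]; [|ring].
    assert (x <= tau) by (apply Hub; split; [lra|exact h]). lra.
Qed.

(* [staircase N c e y] counts the levels c + e, ..., c + N e lying below y *)
Fixpoint staircase (N : nat) (c e y : R) : R :=
  match N with
  | O => 0
  | S N' => (if Rle_dec (c + e) y then 1 else 0) + staircase N' (c + e) e y
  end.

Lemma staircase_below N : forall c e y, 0 < e -> y < c + e -> staircase N c e y = 0.
Proof.
  induction N; intros c e y He Hy; simpl; auto.
  destruct (Rle_dec (c + e) y); [lra|]. rewrite IHN; lra.
Qed.

Lemma staircase_approx N : forall c e y, 0 < e -> c <= y <= c + INR N * e ->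
  y - e < c + e * staircase N c e y <= y.
Proof.
  induction N; intros c e y He Hy.
  - simpl in *. lra.
  - rewrite S_INR in Hy. cbn [staircase].
    destruct (Rle_dec (c + e) y).
    + specialize (IHN (c + e) e y He ltac:(lra)). lra.
    + rewrite staircase_below by lra. lra.
Qed.

Lemma ex_RInt_mul_staircase (w u : R -> R) a b e N : a <= b -> (forall z, continuous w z) ->
  (forall s t, a <= s <= t -> t <= b -> u t <= u s) ->
  forall c, ex_RInt (fun t => w t * staircase N c e (u t)) a b.
Proof.
  intros Hab Hw Hu. induction N; intro c; simpl.
  - apply ex_RInt_Rext with (fun _ => 0); [intros; ring|apply ex_RInt_R0].
  - apply ex_RInt_Rext with (fun t => w t * (if Rle_dec (c + e) (u t) then 1 else 0)
                                   + w t * staircase N (c + e) e (u t)).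
    + intros; ring.
    + apply ex_RInt_Rplus; auto. apply ex_RInt_mul_superlevel; auto.
Qed.

Lemma ex_RInt_mul_nonincreasing (w u : R -> R) a b : a <= b -> (forall z, continuous w z) ->
  (forall s t, a <= s <= t -> t <= b -> u t <= u s) -> ex_RInt (fun t => w t * u t) a b.
Proof.
  intros Hab Hw Hu.
  destruct (ex_RInt_ub w a b (ex_RInt_Rcontinuous w a b Hw)) as [W HW].
  assert (HW' : forall t, a <= t <= b -> Rabs (w t) <= Rabs W).
  { intros t Ht. eapply Rle_trans; [|apply Rle_abs]. apply HW.
    rewrite Rmin_left, Rmax_right by lra. lra. }
  apply ex_RInt_uniform_approx; auto.
  intros r Hr.
  set (e := r / (Rabs W + 1)).
  assert (He : 0 < e) by (unfold e; apply Rdiv_lt_0_compat; [lra|pose proof (Rabs_pos W); lra]).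
  assert (He' : e * (Rabs W + 1) = r) by (unfold e; field; pose proof (Rabs_pos W); lra).
  destruct (INR_archimed e (u a - u b) ltac:(lra)) as [N HN].
  exists (fun t => w t * (u b + e * staircase N (u b) e (u t))).
  split.
  - apply ex_RInt_Rext with (fun t => u b * w t + e * (w t * staircase N (u b) e (u t))).
    + intros; ring.
    + apply ex_RInt_Rplus; apply ex_RInt_Rscal;
        [apply ex_RInt_Rcontinuous | apply ex_RInt_mul_staircase]; auto.
  - intros t Ht.
    assert (Hut : u b <= u t <= u b + INR N * e).
    { split; [apply Hu; lra|]. assert (u t <= u a) by (apply Hu; lra). lra. }
    pose proof (staircase_approx N (u b) e (u t) He Hut).
    replace (w t * u t - w t * (u b + e * staircase N (u b) e (u t)))
      with (w t * (u t - (u b + e * staircase N (u b) e (u t)))) by ring.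
    rewrite Rabs_mult.
    assert (Rabs (u t - (u b + e * staircase N (u b) e (u t))) <= e) by (apply Rabs_le; lra).
    pose proof (HW' t Ht). pose proof (Rabs_pos (w t)).
    pose proof (Rabs_pos (u t - (u b + e * staircase N (u b) e (u t)))).
    nra.
Qed.

Lemma ex_RInt_mul_nondecreasing (w u : R -> R) a b : a <= b -> (forall z, continuous w z) ->
  (forall s t, a <= s <= t -> t <= b -> u s <= u t) -> ex_RInt (fun t => w t * u t) a b.
Proof.
  intros Hab Hw Hu.
  apply ex_RInt_Rext with (fun t => -1 * (w t * (- u t))); [intros; ring|].
  apply ex_RInt_Rscal, ex_RInt_mul_nonincreasing; auto.
  intros s t H1 H2. specialize (Hu s t H1 H2). lra.
Qed.

Definition unimodal (u : R -> R) :=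
  forall s t, 0 <= s <= t -> u t <= u s /\ u (- t) <= u (- s).

Lemma ex_RInt_mul_unimodal (w u : R -> R) M : 0 <= M -> (forall z, continuous w z) ->
  unimodal u -> ex_RInt (fun t => w t * u t) (- M) M.
Proof.
  intros HM Hw Hu. apply ex_RInt_Chasles with 0.
  - apply ex_RInt_mul_nondecreasing; [lra|auto|].
    intros s t H1 H2. destruct (Hu (- t) (- s) ltac:(lra)) as [_ H].
    rewrite !Ropp_involutive in H. exact H.
  - apply ex_RInt_mul_nonincreasing; [lra|auto|].
    intros s t H1 H2. apply (Hu s t ltac:(lra)).
Qed.

Lemma unimodal_plus u v : unimodal u -> unimodal v -> unimodal (fun t => u t + v t).
Proof. intros Hu Hv s t H. destruct (Hu s t H), (Hv s t H). split; lra. Qed.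

Lemma unimodal_reflect u : unimodal u -> unimodal (fun t => u (- t)).
Proof. intros Hu s t H. destruct (Hu s t H). rewrite !Ropp_involutive. split; auto. Qed.

Lemma unimodal_mult u v : unimodal u -> unimodal v -> (forall t, 0 <= u t) -> (forall t, 0 <= v t) ->
  unimodal (fun t => u t * v t).
Proof.
  intros Hu Hv Hu0 Hv0 s t H. destruct (Hu s t H), (Hv s t H).
  split; apply Rmult_le_compat; auto.
Qed.

Lemma even_unimodal_le_abs u : unimodal u -> (forall t, u (- t) = u t) ->
  forall s t, Rabs s <= Rabs t -> u t <= u s.
Proof.
  intros Hu Hs s t H.
  assert (E : forall r, u r = u (Rabs r)).
  { intro r. unfold Rabs. destruct (Rcase_abs r); [symmetry; apply Hs|reflexivity]. }
  rewrite (E s), (E t). apply (Hu (Rabs s) (Rabs t)). split; [apply Rabs_pos|auto].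
Qed.

Lemma even_unimodal_similarly_ordered u v : unimodal u -> (forall t, u (- t) = u t) ->
  unimodal v -> (forall t, v (- t) = v t) ->
  forall s t, 0 <= (u s - u t) * (v s - v t).
Proof.
  intros Hu Hus Hv Hvs s t.
  destruct (Rle_dec (Rabs s) (Rabs t)) as [Hst|Hst].
  - pose proof (even_unimodal_le_abs u Hu Hus s t Hst).
    pose proof (even_unimodal_le_abs v Hv Hvs s t Hst). nra.
  - pose proof (even_unimodal_le_abs u Hu Hus t s ltac:(lra)).
    pose proof (even_unimodal_le_abs v Hv Hvs t s ltac:(lra)). nra.
Qed.

Lemma RInt_even_part (F : R -> R) M : ex_RInt F (- M) M ->
  ex_RInt (fun t => F t + F (- t)) (- M) M /\
  RInt (fun t => F t + F (- t)) (- M) M = 2 * RInt F (- M) M.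
Proof.
  intro H.
  assert (Hswap : ex_RInt F (-1 * (- M) + 0) (-1 * M + 0)).
  { replace (-1 * (- M) + 0) with M by ring. replace (-1 * M + 0) with (- M) by ring.
    apply ex_RInt_swap; auto. }
  assert (Href : ex_RInt (fun t => F (- t)) (- M) M).
  { apply ex_RInt_Rext with (fun y => -1 * (-1 * F (-1 * y + 0))).
    - intros. replace (-1 * x + 0) with (- x) by ring. ring.
    - apply ex_RInt_Rscal. exact (ex_RInt_comp_lin F (-1) 0 (- M) M Hswap). }
  assert (Eref : RInt (fun t => F (- t)) (- M) M = RInt F (- M) M).
  { pose proof (RInt_comp_lin F (-1) 0 (- M) M Hswap) as E.
    replace (-1 * (- M) + 0) with M in E by ring. replace (-1 * M + 0) with (- M) in E by ring.
    rewrite <- (opp_RInt_swap F) in E by auto.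
    change (RInt (fun y => -1 * F (-1 * y + 0)) (- M) M = - RInt F (- M) M) in E.
    rewrite RInt_Rscal in E.
    - rewrite (RInt_Rext (fun t => F (- t)) (fun y => F (-1 * y + 0))); [lra|].
      intros. f_equal. ring.
    - apply ex_RInt_Rext with (fun t => F (- t)); auto.
      intros. f_equal. ring. }
  split; [apply ex_RInt_Rplus; auto|].
  rewrite RInt_Rplus, Eref by auto. lra.
Qed.

Lemma RInt_chebyshev (w g h : R -> R) a b : a <= b ->
  ex_RInt w a b -> ex_RInt (fun t => w t * g t) a b -> ex_RInt (fun t => w t * h t) a b ->
  ex_RInt (fun t => w t * (g t * h t)) a b ->
  (forall t, 0 <= w t) -> (forall s t, 0 <= (g s - g t) * (h s - h t)) ->
  RInt (fun t => w t * g t) a b * RInt (fun t => w t * h t) a b <=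
  RInt w a b * RInt (fun t => w t * (g t * h t)) a b.
Proof.
  intros Hab Iw Ig Ih Igh Hw Hgh.
  set (m := RInt w a b). set (Y := RInt (fun t => w t * g t) a b).
  set (C := RInt (fun t => w t * h t) a b). set (X := RInt (fun t => w t * (g t * h t)) a b).
  (* integrate 0 <= w(s) w(t) (g s - g t) (h s - h t) in s, then in t *)
  assert (Hinner : forall t, 0 <= X + (- h t) * Y + (- g t) * C + (g t * h t) * m).
  { intro t. unfold X, Y, C, m. rewrite <- RInt_lincomb4 by auto.
    apply RInt_ge_0; [auto|apply ex_RInt_lincomb4; auto|].
    intros s _.
    replace (w s * (g s * h s) + - h t * (w s * g s) + - g t * (w s * h s) + g t * h t * w s)
      with (w s * ((g s - g t) * (h s - h t))) by ring.
    apply Rmult_le_pos; auto. }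
  assert (Houter : 0 <= RInt (fun t => X * w t + (- Y) * (w t * h t) + (- C) * (w t * g t)
                                        + m * (w t * (g t * h t))) a b).
  { apply RInt_ge_0; [auto|apply ex_RInt_lincomb4; auto; apply ex_RInt_Rscal; auto|].
    intros t _.
    replace (X * w t + - Y * (w t * h t) + - C * (w t * g t) + m * (w t * (g t * h t)))
      with (w t * (X + - h t * Y + - g t * C + g t * h t * m)) by ring.
    apply Rmult_le_pos; auto. }
  rewrite RInt_lincomb4, RInt_Rscal in Houter by (auto; apply ex_RInt_Rscal; auto).
  fold m Y C X in Houter.
  lra.
Qed.

Lemma RInt_chebyshev_unimodal (w g h : R -> R) M : 0 <= M ->
  (forall z, continuous w z) -> (forall t, 0 <= w t) -> (forall t, w (- t) = w t) ->
  unimodal g -> (forall t, 0 <= g t) ->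
  unimodal h -> (forall t, 0 <= h t) -> (forall t, h (- t) = h t) ->
  RInt (fun t => w t * g t) (- M) M * RInt (fun t => w t * h t) (- M) M <=
  RInt w (- M) M * RInt (fun t => w t * (g t * h t)) (- M) M.
Proof.
  intros HM Hwc Hw0 Hws Hg Hg0 Hh Hh0 Hhs.
  set (gs := fun t => g t + g (- t)).
  assert (Hgs : unimodal gs) by exact (unimodal_plus _ _ Hg (unimodal_reflect _ Hg)).
  assert (Hgs0 : forall t, 0 <= gs t) by (intro t; unfold gs; pose proof (Hg0 t); pose proof (Hg0 (- t)); lra).
  assert (Hgss : forall t, gs (- t) = gs t) by (intro t; unfold gs; rewrite Ropp_involutive; ring).
  pose proof (ex_RInt_mul_unimodal w g M HM Hwc Hg) as Ig.
  pose proof (ex_RInt_mul_unimodal w _ M HM Hwc (unimodal_mult g h Hg Hh Hg0 Hh0)) as Igh.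
  destruct (RInt_even_part _ M Ig) as [Igs Egs].
  destruct (RInt_even_part _ M Igh) as [Igsh Egsh].
  assert (Ews : forall t, w t * g t + w (- t) * g (- t) = w t * gs t)
    by (intro t; unfold gs; rewrite Hws; ring).
  assert (Ewsh : forall t, w t * (g t * h t) + w (- t) * (g (- t) * h (- t)) = w t * (gs t * h t))
    by (intro t; unfold gs; rewrite Hws, Hhs; ring).
  pose proof (RInt_chebyshev w gs h (- M) M ltac:(lra) (ex_RInt_Rcontinuous w _ _ Hwc)
                (ex_RInt_Rext _ _ _ _ (fun t _ => Ews t) Igs)
                (ex_RInt_mul_unimodal w h M HM Hwc Hh)
                (ex_RInt_Rext _ _ _ _ (fun t _ => Ewsh t) Igsh) Hw0
                (even_unimodal_similarly_ordered gs h Hgs Hgss Hh Hhs)) as Hc.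
  rewrite <- (RInt_Rext _ _ _ _ (fun t _ => Ews t)), <- (RInt_Rext _ _ _ _ (fun t _ => Ewsh t)),
          Egs, Egsh in Hc.
  pose proof (RInt_ge_0 w (- M) M ltac:(lra) (ex_RInt_Rcontinuous w _ _ Hwc) (fun t _ => Hw0 t)).
  lra.
Qed.

Lemma RInt_le_radius (F : R -> R) M M' : 0 <= M <= M' -> ex_RInt F (- M') M' ->
  (forall t, 0 <= F t) -> RInt F (- M) M <= RInt F (- M') M'.
Proof.
  intros HM HF H0. rewrite (RInt_split3 F M M' HM HF).
  assert (0 <= RInt F (- M') (- M))
    by (apply RInt_ge_0; [lra|apply ex_RInt_Rsub with (- M') M'; auto; lra|auto]).
  assert (0 <= RInt F M M')
    by (apply RInt_ge_0; [lra|apply ex_RInt_Rsub with (- M') M'; auto; lra|auto]).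
  lra.
Qed.

Lemma RInt_shrink (F : R -> R) K M : 0 <= K <= M -> ex_RInt F (- M) M ->
  (forall t, K < Rabs t -> F t = 0) -> RInt F (- M) M = RInt F (- K) K.
Proof.
  intros HK HF H0. rewrite (RInt_split3 F K M HK HF).
  rewrite (RInt_Rext F (fun _ => 0) (- M) (- K)), (RInt_Rext F (fun _ => 0) K M), !RInt_R0.
  - lra.
  - intros x Hx. rewrite Rmin_left, Rmax_right in Hx by lra. apply H0.
    rewrite Rabs_right by lra. lra.
  - intros x Hx. rewrite Rmin_left, Rmax_right in Hx by lra. apply H0.
    rewrite Rabs_left by lra. lra.
Qed.

Lemma upd_at x i t : upd x i t i = t.
Proof. unfold upd. rewrite Nat.eqb_refl. reflexivity. Qed.

Lemma upd_other x i j t : i <> j -> upd x j t i = x i.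
Proof. intro H. unfold upd. destruct (Nat.eqb_spec i j); [contradiction|reflexivity]. Qed.

Lemma upd_comm x i j s t : i <> j -> upd (upd x i s) j t = upd (upd x j t) i s.
Proof.
  intro H. apply functional_extensionality. intro k. unfold upd.
  destruct (Nat.eqb_spec k j), (Nat.eqb_spec k i); subst; auto. contradiction.
Qed.

Definition unimodal_in (G : (nat -> R) -> R) (j : nat) := forall x, unimodal (fun t => G (upd x j t)).
Definition coord_unimodal (k : nat) (G : (nat -> R) -> R) := forall j, (j < k)%nat -> unimodal_in G j.
Definition coord_even (k : nat) (G : (nat -> R) -> R) :=
  forall j x t, (j < k)%nat -> G (upd x j (- t)) = G (upd x j t).

Lemma unimodal_in_upd G j k s : j <> k -> unimodal_in G j -> unimodal_in (fun y => G (upd y k s)) j.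
Proof. intros Hjk H x a b Hab. simpl. rewrite !(upd_comm _ j k) by auto. apply H; auto. Qed.

Lemma coord_unimodal_upd G k k' s : (k <= k')%nat -> coord_unimodal k G ->
  coord_unimodal k (fun y => G (upd y k' s)).
Proof. intros H HG j Hj. apply unimodal_in_upd; [lia|]. apply HG; auto. Qed.

Lemma coord_unimodal_le G k k' : (k' <= k)%nat -> coord_unimodal k G -> coord_unimodal k' G.
Proof. intros H HG j Hj. apply HG. lia. Qed.

Lemma coord_unimodal_const k c : coord_unimodal k (fun _ => c).
Proof. intros j Hj x s t H. lra. Qed.

Lemma coord_unimodal_mult G H k : coord_unimodal k G -> coord_unimodal k H ->
  (forall y, 0 <= G y) -> (forall y, 0 <= H y) -> coord_unimodal k (fun y => G y * H y).
Proof. intros HG HH HG0 HH0 j Hj x. apply unimodal_mult; auto; [apply HG|apply HH]; auto. Qed.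

(* [iter_int w M k G x] integrates G against w_0 ... w_(k-1) over the
   coordinates 0 .. k-1 in [-M, M], the other coordinates being those of x *)
Fixpoint iter_int (w : nat -> R -> R) (M : R) (k : nat) (G : (nat -> R) -> R) (x : nat -> R) : R :=
  match k with
  | O => G x
  | S k' => RInt (fun t => w k' t * iter_int w M k' G (upd x k' t)) (- M) M
  end.

Lemma iter_int_upd w M k : forall G x j s, (k <= j)%nat ->
  iter_int w M k G (upd x j s) = iter_int w M k (fun y => G (upd y j s)) x.
Proof.
  induction k; intros G x j s Hj; simpl; auto.
  f_equal. apply functional_extensionality. intro t. f_equal.
  rewrite upd_comm by lia. apply IHk. lia.
Qed.

Lemma iter_int_zero w M k : forall x, iter_int w M k (fun _ => 0) x = 0.
Proof.
  induction k; intro x; simpl; auto.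
  rewrite (RInt_Rext _ (fun _ => 0)); [apply RInt_R0|]. intros; rewrite IHk; ring.
Qed.

Lemma coord_even_le H k k' : (k' <= k)%nat -> coord_even k H -> coord_even k' H.
Proof. intros Hk HH j x t Hj. apply HH. lia. Qed.

Lemma iter_int_section_even w M k H x : coord_even (S k) H ->
  forall t, iter_int w M k H (upd x k (- t)) = iter_int w M k H (upd x k t).
Proof.
  intros HH t. rewrite !iter_int_upd by lia. f_equal.
  apply functional_extensionality; intro y. apply HH. lia.
Qed.

Definition box_mass (w : nat -> R -> R) (M : R) (k : nat) : R := prodd k (fun i => RInt (w i) (- M) M).

Section IteratedIntegral.

Variable w : nat -> R -> R.
Variable d : nat.
Hypothesis Hwc : forall i, (i < d)%nat -> forall z, continuous (w i) z.
Hypothesis Hwp : forall i t, (i < d)%nat -> 0 <= w i t.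
Hypothesis Hws : forall i t, (i < d)%nat -> w i (- t) = w i t.

Lemma iter_int_section_unimodal_of_le M k :
  (forall G G', coord_unimodal k G -> coord_unimodal k G' -> (forall y, G y <= G' y) ->
     forall x, iter_int w M k G x <= iter_int w M k G' x) ->
  forall G, coord_unimodal (S k) G -> forall x, unimodal (fun t => iter_int w M k G (upd x k t)).
Proof.
  intros Hle G HG x s t Hst. rewrite !iter_int_upd by lia.
  assert (HGk : unimodal_in G k) by (apply HG; lia).
  split; apply Hle;
    try (apply coord_unimodal_upd; [lia|]; apply (coord_unimodal_le _ (S k)); auto);
    intro y; apply (HGk y s t Hst).
Qed.

Lemma iter_int_le M k : 0 <= M -> (k <= d)%nat ->
  forall G G', coord_unimodal k G -> coord_unimodal k G' -> (forall y, G y <= G' y) ->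
  forall x, iter_int w M k G x <= iter_int w M k G' x.
Proof.
  intro HM. induction k; intros Hk G G' HG HG' HGG' x; simpl; auto.
  assert (Hsec : forall G, coord_unimodal (S k) G ->
            ex_RInt (fun t => w k t * iter_int w M k G (upd x k t)) (- M) M).
  { intros. apply ex_RInt_mul_unimodal; [exact HM|apply Hwc; lia|].
    apply iter_int_section_unimodal_of_le; auto. apply IHk. lia. }
  apply RInt_le; auto; [lra|].
  intros t _. apply Rmult_le_compat_l; [apply Hwp; lia|].
  apply IHk; auto; try lia; apply (coord_unimodal_le _ (S k)); auto.
Qed.

Lemma iter_int_section_unimodal M k : 0 <= M -> (k <= d)%nat ->
  forall G, coord_unimodal (S k) G -> forall x, unimodal (fun t => iter_int w M k G (upd x k t)).
Proof. intros. apply iter_int_section_unimodal_of_le; auto. apply iter_int_le; auto. Qed.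

Lemma ex_RInt_iter_int_section M k : 0 <= M -> (k < d)%nat ->
  forall G, coord_unimodal (S k) G -> forall x,
  ex_RInt (fun t => w k t * iter_int w M k G (upd x k t)) (- M) M.
Proof.
  intros. apply ex_RInt_mul_unimodal; [auto|apply Hwc; auto|].
  apply iter_int_section_unimodal; auto; lia.
Qed.

Lemma iter_int_nonneg M k : 0 <= M -> (k <= d)%nat -> forall G, coord_unimodal k G ->
  (forall y, 0 <= G y) -> forall x, 0 <= iter_int w M k G x.
Proof.
  intro HM. induction k; intros Hk G HG HG0 x; simpl; auto.
  apply RInt_ge_0; [lra|apply ex_RInt_iter_int_section; auto; lia|].
  intros t _. apply Rmult_le_pos; [apply Hwp; lia|].
  apply IHk; auto; try lia. apply (coord_unimodal_le _ (S k)); auto.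
Qed.

Lemma iter_int_const M k : (k <= d)%nat -> forall x, iter_int w M k (fun _ => 1) x = box_mass w M k.
Proof.
  induction k; intros Hk x; simpl; auto.
  rewrite (RInt_Rext _ (fun t => box_mass w M k * w k t)).
  - rewrite RInt_Rscal by (apply ex_RInt_Rcontinuous, Hwc; lia). reflexivity.
  - intros t _. rewrite IHk by lia. ring.
Qed.

Lemma iter_int_chebyshev M k : 0 <= M -> (k <= d)%nat -> forall G H,
  coord_unimodal k G -> coord_unimodal k H -> (forall y, 0 <= G y) -> (forall y, 0 <= H y) ->
  coord_even k H ->
  forall x, iter_int w M k G x * iter_int w M k H x <= box_mass w M k * iter_int w M k (fun y => G y * H y) x.
Proof.
  intro HM. induction k; intros Hk G H HG HH HG0 HH0 HHs x.
  - simpl. unfold box_mass; simpl. lra.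
  - simpl iter_int. unfold box_mass; simpl prodd. fold (box_mass w M k).
    assert (HGk : coord_unimodal k G) by (apply (coord_unimodal_le _ (S k)); auto).
    assert (HHk : coord_unimodal k H) by (apply (coord_unimodal_le _ (S k)); auto).
    set (GH := fun y => G y * H y).
    assert (HGH : coord_unimodal (S k) GH) by (apply coord_unimodal_mult; auto).
    set (g := fun t => iter_int w M k G (upd x k t)).
    set (h := fun t => iter_int w M k H (upd x k t)).
    assert (Ug : unimodal g) by (apply iter_int_section_unimodal; auto; lia).
    assert (Uh : unimodal h) by (apply iter_int_section_unimodal; auto; lia).
    assert (g0 : forall t, 0 <= g t) by (intro t; apply iter_int_nonneg; auto; lia).
    assert (h0 : forall t, 0 <= h t) by (intro t; apply iter_int_nonneg; auto; lia).
    assert (hs : forall t, h (- t) = h t) by (intro t; apply iter_int_section_even; auto).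
    pose proof (RInt_chebyshev_unimodal (w k) g h M HM (Hwc k ltac:(lia)) (fun t => Hwp k t ltac:(lia))
                  (fun t => Hws k t ltac:(lia)) Ug g0 Uh h0 hs) as Hc.
    pose proof (ex_RInt_iter_int_section M k HM ltac:(lia) _ HGH x) as Iw.
    assert (Hle : RInt (fun t => w k t * (g t * h t)) (- M) M <=
                  box_mass w M k * RInt (fun t => w k t * iter_int w M k GH (upd x k t)) (- M) M).
    { rewrite <- (RInt_Rscal _ _ _ _ Iw).
      apply RInt_le; [lra|apply ex_RInt_mul_unimodal; [exact HM|apply Hwc; lia|apply unimodal_mult; auto]
                     |apply ex_RInt_Rscal; auto|].
      intros t _.
      replace (box_mass w M k * (w k t * iter_int w M k GH (upd x k t)))
        with (w k t * (box_mass w M k * iter_int w M k GH (upd x k t))) by ring.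
      apply Rmult_le_compat_l; [apply Hwp; lia|]. unfold g, h.
      apply IHk; auto; try lia. apply (coord_even_le _ (S k)); auto. }
    assert (Hm : 0 <= RInt (w k) (- M) M).
    { apply RInt_ge_0; [lra|apply ex_RInt_Rcontinuous, Hwc; lia|intros; apply Hwp; lia]. }
    eapply Rle_trans; [exact Hc|].
    fold g h in Hle. nra.
Qed.

Lemma iter_int_support K M k : 0 <= K <= M -> (k <= d)%nat -> forall G, coord_unimodal k G ->
  (forall y j, (j < k)%nat -> K < Rabs (y j) -> G y = 0) ->
  forall x, iter_int w M k G x = iter_int w K k G x.
Proof.
  intros HKM. induction k; intros Hk G HG HGs x; simpl; auto.
  assert (HGk : coord_unimodal k G) by (apply (coord_unimodal_le _ (S k)); auto).
  rewrite (RInt_Rext (fun t => w k t * iter_int w M k G (upd x k t))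
                     (fun t => w k t * iter_int w K k G (upd x k t))).
  2: { intros. rewrite IHk; auto; try lia. intros y j Hj. apply HGs. lia. }
  apply RInt_shrink; [lra| |].
  - apply ex_RInt_mul_unimodal; [lra|apply Hwc; lia|].
    apply iter_int_section_unimodal; [lra|lia|auto].
  - intros t Ht. rewrite iter_int_upd by lia.
    rewrite (functional_extensionality (fun y => G (upd y k t)) (fun _ => 0)).
    + rewrite iter_int_zero. ring.
    + intro y. apply HGs with k; [lia|]. rewrite upd_at. auto.
Qed.

Lemma iter_int_le_radius M M' k : 0 <= M <= M' -> (k <= d)%nat -> forall G, coord_unimodal k G ->
  (forall y, 0 <= G y) -> forall x, iter_int w M k G x <= iter_int w M' k G x.
Proof.
  intros HMM. induction k; intros Hk G HG HG0 x; simpl; [lra|].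
  assert (HGk : coord_unimodal k G) by (apply (coord_unimodal_le _ (S k)); auto).
  pose proof (ex_RInt_iter_int_section M' k ltac:(lra) ltac:(lia) G HG x) as I'.
  apply Rle_trans with (RInt (fun t => w k t * iter_int w M' k G (upd x k t)) (- M) M).
  - apply RInt_le; [lra|apply ex_RInt_iter_int_section; [lra|lia|auto]
                   |apply ex_RInt_Rsub with (- M') M'; auto; lra|].
    intros t _. apply Rmult_le_compat_l; [apply Hwp; lia|]. apply IHk; auto; lia.
  - apply RInt_le_radius; auto.
    intro t. apply Rmult_le_pos; [apply Hwp; lia|]. apply iter_int_nonneg; [lra|lia|auto|auto].
Qed.

(* the prefactor [a], constant in the integrated coordinates, collects the
   weights of the coordinates already integrated out *)
Lemma box_int_iter_int M k : 0 <= M -> (k <= d)%nat -> forall G a, coord_unimodal k G ->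
  (forall y j s, (j < k)%nat -> a (upd y j s) = a y) ->
  forall x, box_int k M (fun y => a y * (G y * prodd k (fun i => w i (y i)))) x = a x * iter_int w M k G x.
Proof.
  intro HM. induction k; intros Hk G a HG Ha x.
  - simpl. ring.
  - change (RI (fun t => box_int k M (fun y => a y * (G y * (prodd k (fun i => w i (y i)) * w k (y k))))
                                 (upd x k t)) (- M) M
            = a x * RInt (fun t => w k t * iter_int w M k G (upd x k t)) (- M) M).
    pose proof (ex_RInt_iter_int_section M k HM ltac:(lia) G HG x) as I.
    rewrite <- RInt_Rscal, <- RI_RInt by (auto; apply ex_RInt_Rscal; auto).
    f_equal. apply functional_extensionality. intro t.
    replace (fun y => a y * (G y * (prodd k (fun i => w i (y i)) * w k (y k))))
      with (fun y => (a y * w k (y k)) * (G y * prodd k (fun i => w i (y i))))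
      by (apply functional_extensionality; intro; ring).
    rewrite IHk; [| lia | apply (coord_unimodal_le _ (S k)); auto; lia |].
    + rewrite upd_at, Ha by lia. ring.
    + intros y j s Hj. rewrite Ha, upd_other by lia. reflexivity.
Qed.

End IteratedIntegral.

Lemma Un_cv_eventually_const (u : nat -> R) K l : (forall n, (K <= n)%nat -> u n = l) -> Un_cv u l.
Proof.
  intros H eps He. exists K. intros n Hn. rewrite H by lia. unfold R_dist.
  rewrite Rminus_diag, Rabs_R0. lra.
Qed.

Section Limits.

Variable w : nat -> R -> R.
Variable d : nat.
Hypothesis Hwc : forall i, (i < d)%nat -> forall z, continuous (w i) z.
Hypothesis Hwp : forall i t, (i < d)%nat -> 0 <= w i t.
Hypothesis Hws : forall i t, (i < d)%nat -> w i (- t) = w i t.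
Hypothesis Hmass : forall i, (i < d)%nat -> Un_cv (fun n => RInt (w i) (- INR n) (INR n)) 1.

Lemma coord_mass_bounds i n : (i < d)%nat -> 0 <= RInt (w i) (- INR n) (INR n) <= 1.
Proof.
  intro Hi.
  assert (Hgrow : Un_growing (fun n => RInt (w i) (- INR n) (INR n))).
  { intro m. apply RInt_le_radius.
    - split; [apply pos_INR|apply le_INR; lia].
    - apply ex_RInt_Rcontinuous, Hwc; auto.
    - intro t; apply Hwp; auto. }
  split.
  - apply RInt_ge_0; [pose proof (pos_INR n); lra|apply ex_RInt_Rcontinuous, Hwc; auto|].
    intros; apply Hwp; auto.
  - exact (growing_ineq _ 1 Hgrow (Hmass i Hi) n).
Qed.

Lemma box_mass_bounds k n : (k <= d)%nat -> 0 <= box_mass w (INR n) k <= 1.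
Proof.
  induction k; intro Hk; unfold box_mass; simpl; [lra|]. fold (box_mass w (INR n) k).
  specialize (IHk ltac:(lia)). pose proof (coord_mass_bounds k n ltac:(lia)).
  split; [apply Rmult_le_pos; lra|]. rewrite <- (Rmult_1_r 1). apply Rmult_le_compat; lra.
Qed.

Lemma box_mass_cv k : (k <= d)%nat -> Un_cv (fun n => box_mass w (INR n) k) 1.
Proof.
  induction k; intro Hk; unfold box_mass; simpl.
  - apply Un_cv_eventually_const with 0%nat. auto.
  - rewrite <- (Rmult_1_r 1). apply CV_mult; [apply IHk; lia|apply Hmass; lia].
Qed.

Lemma iter_int_cv_of_support G : coord_unimodal d G ->
  (exists M, forall y, (exists j, (j < d)%nat /\ M < Rabs (y j)) -> G y = 0) ->
  exists l, Un_cv (fun n => iter_int w (INR n) d G (fun _ => 0)) l.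
Proof.
  intros HG [M HM].
  destruct (INR_archimed 1 M ltac:(lra)) as [K HK]. rewrite Rmult_1_r in HK.
  exists (iter_int w (INR K) d G (fun _ => 0)).
  apply Un_cv_eventually_const with K. intros n Hn.
  apply (iter_int_support w d Hwc Hwp); auto.
  - split; [apply pos_INR|apply le_INR; auto].
  - intros y j Hj Hy. apply HM. exists j. split; auto. lra.
Qed.

Lemma iter_int_cv_of_bounded H : coord_unimodal d H -> (forall y, 0 <= H y <= 1) ->
  exists l, Un_cv (fun n => iter_int w (INR n) d H (fun _ => 0)) l.
Proof.
  intros HH HH01.
  assert (Hgrow : Un_growing (fun n => iter_int w (INR n) d H (fun _ => 0))).
  { intro n. apply (iter_int_le_radius w d Hwc Hwp); auto.
    - split; [apply pos_INR|apply le_INR; lia].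
    - intro y; apply HH01. }
  assert (Hub : has_ub (fun n => iter_int w (INR n) d H (fun _ => 0))).
  { exists 1. intros v [n ->].
    apply Rle_trans with (iter_int w (INR n) d (fun _ => 1) (fun _ => 0)).
    - apply (iter_int_le w d Hwc Hwp); auto; [apply pos_INR|apply coord_unimodal_const|apply HH01].
    - rewrite (iter_int_const w d Hwc) by auto. apply box_mass_bounds; auto. }
  destruct (growing_cv _ Hgrow Hub) as [l Hl]. exists l; exact Hl.
Qed.

Lemma iter_int_chebyshev_lim G H la lb lc :
  coord_unimodal d G -> coord_unimodal d H -> (forall y, 0 <= G y) -> (forall y, 0 <= H y) ->
  coord_even d H ->
  Un_cv (fun n => iter_int w (INR n) d (fun y => G y * H y) (fun _ => 0)) la ->
  Un_cv (fun n => iter_int w (INR n) d G (fun _ => 0)) lb ->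
  Un_cv (fun n => iter_int w (INR n) d H (fun _ => 0)) lc ->
  lb * lc <= la.
Proof.
  intros HG HH HG0 HH0 HHs Ha Hb Hc.
  rewrite <- (Rmult_1_l la).
  apply (Rle_cv_lim
    (Un := fun n => iter_int w (INR n) d G (fun _ => 0) * iter_int w (INR n) d H (fun _ => 0))
    (Vn := fun n => box_mass w (INR n) d * iter_int w (INR n) d (fun y => G y * H y) (fun _ => 0))).
  - intro n. apply (iter_int_chebyshev w d Hwc Hwp Hws); auto. apply pos_INR.
  - apply CV_mult; auto.
  - apply CV_mult; auto. apply box_mass_cv; auto.
Qed.

End Limits.


Definition radial_weight (rho : nat -> R -> R) (i : nat) (t : R) : R := rho i (Rabs t).

Lemma continuous_radial (r : R -> R) :
  (forall t, 0 <= t -> continue_in r (fun u => 0 <= u) t) ->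
  forall z, continuous (fun t => r (Rabs t)) z.
Proof.
  intros H z. apply continuity_pt_filterlim.
  unfold continuity_pt, continue_in, limit1_in, limit_in in *.
  intros eps Heps.
  destruct (H (Rabs z) (Rabs_pos z) eps Heps) as [alp [Halp Hd]].
  exists alp. split; auto. intros x [_ Hx]. simpl in *.
  destruct (Req_dec (Rabs x) (Rabs z)) as [E|E].
  - rewrite E. unfold R_dist. rewrite Rminus_diag, Rabs_R0. lra.
  - apply Hd. split; [split; [apply Rabs_pos|auto]|].
    unfold R_dist in *. eapply Rle_lt_trans; [apply Rabs_triang_inv2|auto].
Qed.

Lemma radial_weight_mass_cv rho i : (forall z, continuous (radial_weight rho i) z) ->
  Un_cv (fun n => RI (fun t => rho i (Rabs t)) (- INR n) (INR n)) 1 ->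
  Un_cv (fun n => RInt (radial_weight rho i) (- INR n) (INR n)) 1.
Proof.
  intros Hc Hcv. replace (fun n : nat => RInt (radial_weight rho i) (- INR n) (INR n))
    with (fun n : nat => RI (radial_weight rho i) (- INR n) (INR n)); [exact Hcv|].
  apply functional_extensionality; intro n. apply RI_RInt, ex_RInt_Rcontinuous, Hc.
Qed.

Lemma mu_int_lim d rho G l :
  (forall i, (i < d)%nat -> forall z, continuous (radial_weight rho i) z) ->
  (forall i t, (i < d)%nat -> 0 <= radial_weight rho i t) ->
  coord_unimodal d G ->
  Un_cv (fun n => iter_int (radial_weight rho) (INR n) d G (fun _ => 0)) l ->
  mu_int d rho G = l.
Proof.
  intros Hwc Hwp HG Hl.
  assert (Hbox : forall n, box_int d (INR n) (fun x => G x * dens d rho x) (fun _ => 0)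
                           = iter_int (radial_weight rho) (INR n) d G (fun _ => 0)).
  { intro n. rewrite <- Rmult_1_l.
    rewrite <- (box_int_iter_int _ d Hwc Hwp (INR n) d (pos_INR n) (Nat.le_refl d) G (fun _ => 1) HG
                  (fun _ _ _ _ => eq_refl)).
    f_equal. apply functional_extensionality; intro y. unfold dens, radial_weight. ring. }
  assert (Hcv : Un_cv (fun n => box_int d (INR n) (fun x => G x * dens d rho x) (fun _ => 0)) l).
  { intros eps He. destruct (Hl eps He) as [N HN]. exists N. intros n Hn. rewrite Hbox. auto. }
  exact (UL_sequence _ _ _ (epsilon_spec (inhabits 0) _ (ex_intro _ l Hcv)) Hcv).
Qed.

Lemma C1_unimodal (g : R -> R) : Defs.C1 g -> unimodal g.
Proof.
  intros [_ [_ [Hg0 [Hqc Hmax]]]] s t Hst.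
  (* if g s < g t with 0 <= s <= t, a level strictly between them is exceeded at 0 and
     at t but not at s, against the convexity of the superlevel set *)
  split.
  - destruct (Rle_dec (g t) (g s)) as [h|h]; auto. exfalso.
    set (c := (g s + g t) / 2).
    assert (c < g s); [|unfold c in *; lra].
    apply (Hqc c ltac:(unfold c; pose proof (Hg0 s); lra) 0 t s); unfold c; try lra.
    pose proof (Hmax t). lra.
  - destruct (Rle_dec (g (- t)) (g (- s))) as [h|h]; auto. exfalso.
    set (c := (g (- s) + g (- t)) / 2).
    assert (c < g (- s)); [|unfold c in *; lra].
    apply (Hqc c ltac:(unfold c; pose proof (Hg0 (- s)); lra) (- t) 0 (- s)); unfold c; try lra.
    pose proof (Hmax (- t)). lra.
Qed.

Lemma Cbar_coord_unimodal d f : Cbar d f -> coord_unimodal d f.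
Proof. intros [_ [_ [_ Hf1]]] j Hj x. apply C1_unimodal, Hf1; auto. Qed.

Lemma sumd_le n (a b : nat -> R) : (forall i, (i < n)%nat -> a i <= b i) -> sumd n a <= sumd n b.
Proof.
  induction n; intro H; simpl; [lra|].
  pose proof (H n ltac:(lia)). pose proof (IHn (fun i Hi => H i ltac:(lia))). lra.
Qed.

Lemma indB_bounds d phi y : 0 <= indB d phi y <= 1.
Proof. unfold indB. destruct Rle_dec; lra. Qed.

Lemma indB_le_abs d phi :
  (forall i s t, (i < d)%nat -> 0 <= s -> s < t -> phi i s < phi i t) ->
  forall j x s t, (j < d)%nat -> Rabs s <= Rabs t -> indB d phi (upd x j t) <= indB d phi (upd x j s).
Proof.
  intros Hphi j x s t Hj Hst. unfold indB.
  assert (sumd d (fun i => phi i (Rabs (upd x j s i))) <= sumd d (fun i => phi i (Rabs (upd x j t i)))).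
  { apply sumd_le. intros i Hi. unfold upd. destruct (Nat.eqb_spec i j); [subst|lra].
    destruct (Req_dec (Rabs s) (Rabs t)) as [E|E]; [rewrite E; lra|].
    left. apply Hphi; auto; [apply Rabs_pos|lra]. }
  do 2 destruct Rle_dec; lra.
Qed.

Lemma indB_coord_unimodal d phi :
  (forall i s t, (i < d)%nat -> 0 <= s -> s < t -> phi i s < phi i t) ->
  coord_unimodal d (indB d phi).
Proof.
  intros Hphi j Hj x s t Hst.
  split; apply indB_le_abs; auto; rewrite ?Rabs_Ropp, !Rabs_pos_eq; lra.
Qed.

Lemma indB_coord_even d phi : coord_even d (indB d phi).
Proof.
  intros j x t Hj. unfold indB.
  replace (fun i => phi i (Rabs (upd x j (- t) i))) with (fun i => phi i (Rabs (upd x j t i))); auto.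
  apply functional_extensionality. intro i. unfold upd. destruct (Nat.eqb i j); auto.
  rewrite Rabs_Ropp. auto.
Qed.

Theorem mainTheorem8 (d : nat) (rho phi : nat -> R -> R)
  (Hrho_pos : forall i t, (i < d)%nat -> 0 <= t -> 0 < rho i t)
  (Hrho_cont : forall i t, (i < d)%nat -> 0 <= t ->
      continue_in (rho i) (fun u => 0 <= u) t)
  (Hrho_prob : forall i, (i < d)%nat ->
      Un_cv (fun n => RI (fun t => rho i (Rabs t)) (- INR n) (INR n)) 1)
  (Hphi_cont : forall i t, (i < d)%nat -> 0 <= t ->
      continue_in (phi i) (fun u => 0 <= u) t)
  (Hphi_nonneg : forall i t, (i < d)%nat -> 0 <= t -> 0 <= phi i t)
  (Hphi_mono : forall i s t, (i < d)%nat -> 0 <= s -> s < t -> phi i s < phi i t)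
  (Hphi0 : forall i, (i < d)%nat -> phi i 0 = 0)
  (f : (nat -> R) -> R) (Hf : Cbar d f) :
  mu_int d rho (fun x => f x * indB d phi x)
    >= mu_int d rho f * mu_int d rho (indB d phi).
Proof.
  pose (w := radial_weight rho).
  assert (Hwc : forall i, (i < d)%nat -> forall z, continuous (w i) z)
    by (intros i Hi; apply continuous_radial; intros; apply Hrho_cont; auto).
  assert (Hwp : forall i t, (i < d)%nat -> 0 <= w i t)
    by (intros; left; apply Hrho_pos, Rabs_pos; auto).
  assert (Hws : forall i t, (i < d)%nat -> w i (- t) = w i t)
    by (intros; unfold w, radial_weight; rewrite Rabs_Ropp; auto).
  assert (Hmass : forall i, (i < d)%nat -> Un_cv (fun n => RInt (w i) (- INR n) (INR n)) 1)
    by (intros; apply radial_weight_mass_cv; auto).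
  pose proof (Cbar_coord_unimodal d f Hf) as Uf.
  destruct Hf as [_ [[M Hsupp] [Hf0 _]]].
  pose proof (indB_coord_unimodal d phi Hphi_mono) as UB.
  assert (UfB : coord_unimodal d (fun y => f y * indB d phi y))
    by (apply coord_unimodal_mult; auto; apply indB_bounds).
  destruct (iter_int_cv_of_support w d Hwc Hwp f Uf (ex_intro _ M Hsupp)) as [lb Hb].
  destruct (iter_int_cv_of_support w d Hwc Hwp _ UfB) as [la Ha].
  { exists M. intros y Hy. rewrite Hsupp by auto. ring. }
  destruct (iter_int_cv_of_bounded w d Hwc Hwp Hmass _ UB (indB_bounds d phi)) as [lc Hc].
  rewrite (mu_int_lim d rho _ la Hwc Hwp UfB Ha), (mu_int_lim d rho _ lb Hwc Hwp Uf Hb),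
          (mu_int_lim d rho _ lc Hwc Hwp UB Hc).
  apply Rle_ge, (iter_int_chebyshev_lim w d Hwc Hwp Hws Hmass f (indB d phi)); auto.
  - apply indB_bounds.
  - apply indB_coord_even.
Qed.
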